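(* Let $D$ be a squarefree integer and let $K$ be one of $\mathbb{R},\mathbb{Q}_2,\mathbb{Q}_3,\mathbb{Q}_5$. Then $C_D(K)\neq\emptyset$ if and only if $D$ is a square in $K$; explicitly, this means $D>0$, $D\equiv1\pmod 8$, $D\equiv 1\pmod 3$, $D\equiv\pm1\pmod 5$ for $K=\mathbb{R},\mathbb{Q}_2,\mathbb{Q}_3,\mathbb{Q}_5$ respectively.
   Context: $C_D\subset\mathbb{P}^4$ is the curve over $\mathbb{Q}$ given by $X_0^2-2X_1^2+X_2^2=0$, $X_1^2-2X_2^2+DX_3^2=0$, $X_2^2-2DX_3^2+X_4^2=0$. *)

From mathcomp Require Import all_boot all_order all_algebra.
From mathcomp Require Import reals.
Set Implicit Arguments. Unset Strict Implicit. Unset Printing Implicit Defensive.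
Import Order.TTheory GRing.Theory Num.Theory.
Local Open Scope ring_scope.

Definition squarefree (D : int) : Prop :=
  D != 0 /\ forall p : nat, prime p -> ~~ (p ^ 2 %| `|D|)%N.

Definition CD_eqs {T : comPzRingType} (D : T) (x0 x1 x2 x3 x4 : T) : Prop :=
  [/\ x0 ^+ 2 - 2 * x1 ^+ 2 + x2 ^+ 2 = 0,
      x1 ^+ 2 - 2 * x2 ^+ 2 + D * x3 ^+ 2 = 0 &
      x2 ^+ 2 - 2 * D * x3 ^+ 2 + x4 ^+ 2 = 0].

Definition CD_real_point (R : realType) (D : int) : Prop :=
  exists x0 x1 x2 x3 x4 : R,
    ~ [/\ x0 = 0, x1 = 0, x2 = 0, x3 = 0 & x4 = 0] /\
    CD_eqs (D%:~R) x0 x1 x2 x3 x4.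

Definition real_square (R : realType) (D : int) : Prop :=
  exists y : R, D%:~R = y ^+ 2.

(* Z_p = lim Z/p^k Z.  An element of Z_p is represented by a compatible
   sequence a : nat -> int, a k being its residue modulo p^k. *)
Definition zp_compat (p : nat) (a : nat -> int) : Prop :=
  forall k : nat, (a k.+1 = a k %[mod (p ^ k)%:Z])%Z.

Definition zp_unit (p : nat) (a : nat -> int) : Prop :=
  ~~ ((p%:Z) %| a 1%N)%Z.

Definition CD_eqs_mod (m D x0 x1 x2 x3 x4 : int) : Prop :=
  [/\ (x0 ^+ 2 - 2 * x1 ^+ 2 + x2 ^+ 2 = 0 %[mod m])%Z,
      (x1 ^+ 2 - 2 * x2 ^+ 2 + D * x3 ^+ 2 = 0 %[mod m])%Z &
      (x2 ^+ 2 - 2 * D * x3 ^+ 2 + x4 ^+ 2 = 0 %[mod m])%Z].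

(* C_D(Q_p) <> empty : every point of P^4(Q_p) has a representative in Z_p^5
   with some coordinate a unit; the equations hold in Z_p, i.e. modulo p^k
   for every k (ring operations of Z_p are componentwise on residues). *)
Definition CD_padic_point (p : nat) (D : int) : Prop :=
  exists x0 x1 x2 x3 x4 : nat -> int,
    [/\ zp_compat p x0, zp_compat p x1, zp_compat p x2, zp_compat p x3
      & zp_compat p x4] /\
    (zp_unit p x0 \/ zp_unit p x1 \/ zp_unit p x2 \/ zp_unit p x3 \/ zp_unit p x4) /\
    forall k : nat, CD_eqs_mod (p ^ k)%:Z D (x0 k) (x1 k) (x2 k) (x3 k) (x4 k).

(* D is a square in Q_p : D = (y / p^n)^2 for some y in Z_p and n, i.e.
   D * p^(2n) = y^2 in Z_p. *)
Definition padic_square (p : nat) (D : int) : Prop :=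
  exists (y : nat -> int) (n : nat), zp_compat p y /\
    forall k : nat, (D * (p ^ (2 * n))%:Z = y k ^+ 2 %[mod (p ^ k)%:Z])%Z.

From mathcomp Require Import all_boot all_order all_algebra.
From mathcomp Require Import reals.
From mathcomp Require Import zify ring lra.
Import Order.TTheory GRing.Theory Num.Theory.
Local Open Scope ring_scope.

(* The point (y : y : y : 1 : y) lies on C_D whenever D = y^2.  Conversely, over R
   a negative D turns the third quadric x2^2 + x4^2 = 2 D x3^2 into x2 = x3 = x4 = 0,
   and then all coordinates vanish.  Over Q_p take a primitive point over Z_p: when
   the congruence fails, a finite computation with the quadrics modulo 8, 3, 5
   shows that p divides x0, x1, x2, x4; the second quadric modulo p^2 then gives
   p^2 | D x3^2, so p | x3 as D is squarefree, contradicting primitivity.  A square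
   D p^2n = y^2 in Z_p yields, after cancelling p^2n, squares congruent to D modulo
   every p^k, and as p^2 does not divide D this forces the congruence; conversely
   Hensel's lemma (modulo 8 for p = 2) gives a square root of D in Z_p. *)

Lemma Posz_expn (p k : nat) : (p ^ k)%:Z = p%:Z ^+ k.
Proof. by rewrite -!natz natrX. Qed.

Lemma eqz_modP (m a b : int) : (a = b %[mod m])%Z <-> exists q, a - b = q * m.
Proof.
split=> [/eqP | [q h]]; first by rewrite eqz_mod_dvd => /dvdzP.
by apply/eqP; rewrite eqz_mod_dvd h dvdz_mull.
Qed.

Lemma eqz_mod_dvdW (m n a b : int) :
  (m %| n)%Z -> (a = b %[mod n])%Z -> (a = b %[mod m])%Z.
Proof.
move=> mn /eqP; rewrite eqz_mod_dvd => /(dvdz_trans mn) h.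
by apply/eqP; rewrite eqz_mod_dvd.
Qed.

Lemma dvdz_Posz_exp2l (p : nat) {i j : nat} : (i <= j)%N -> ((p ^ i)%:Z %| (p ^ j)%:Z)%Z.
Proof. by move=> ij; rewrite !Posz_expn dvdz_exp2l. Qed.

Lemma modz_dvdm (d m x : int) : (d %| m)%Z -> ((x %% m)%Z = x %[mod d])%Z.
Proof. by case/dvdzP=> c ->; rewrite {2}(divz_eq x (c * d)) mulrA modzMDl. Qed.

Lemma dvdz_modz (d m x : int) : (d %| m)%Z -> (d %| x %% m)%Z = (d %| x)%Z.
Proof. by move=> dm; apply/dvdz_mod0P/dvdz_mod0P; rewrite modz_dvdm. Qed.

Lemma prime_dvdz_sqr (p : nat) (a : int) :
  prime p -> (p%:Z %| a ^+ 2)%Z -> (p%:Z %| a)%Z.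
Proof. by move=> pp; rewrite expr2 !dvdzE abszM Euclid_dvdM // orbb. Qed.

Lemma ndvd2z_odd {a : int} : ~~ (2%:Z %| a)%Z -> exists q, a = q * 2 + 1.
Proof.
move=> a_odd; exists (a %/ 2)%Z; rewrite {1}(divz_eq a 2); congr (_ + _).
have : (a %% 2)%Z != 0 by apply: contra a_odd => /eqP/dvdz_mod0P.
have := modz_ge0 a (isT : 2 != 0 :> int); have := ltz_pmod a (isT : 0 < 2 :> int).
lia.
Qed.

Lemma squarefree_ndvdz {D : int} (p : nat) :
  squarefree D -> prime p -> ~~ ((p ^ 2)%:Z %| D)%Z.
Proof. by case=> _ sqf /sqf. Qed.

Lemma eqz_modD (m a a' b b' : int) : (a = a' %[mod m])%Z -> (b = b' %[mod m])%Z ->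
  (a + b = a' + b' %[mod m])%Z.
Proof. by move=> ha hb; rewrite -modzDm ha hb modzDm. Qed.

Lemma eqz_modN (m a a' : int) : (a = a' %[mod m])%Z -> (- a = - a' %[mod m])%Z.
Proof. by move=> ha; rewrite -modzNm ha modzNm. Qed.

Lemma eqz_modM (m a a' b b' : int) : (a = a' %[mod m])%Z -> (b = b' %[mod m])%Z ->
  (a * b = a' * b' %[mod m])%Z.
Proof. by move=> ha hb; rewrite -modzMm ha hb modzMm. Qed.

Lemma eqz_modX (m a a' : int) (n : nat) : (a = a' %[mod m])%Z ->
  (a ^+ n = a' ^+ n %[mod m])%Z.
Proof. by move=> ha; rewrite -modzXm ha modzXm. Qed.

Definition residues (M : nat) : seq int := [seq r%:Z | r <- iota 0 M].

Lemma modz_residues (x : int) {M : nat} : (0 < M)%N -> (x %% M%:Z)%Z \in residues M.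
Proof.
move=> M0; have M_gt0 : 0 < M%:Z by rewrite ltz_nat.
have := ltz_pmod x M_gt0; have := modz_ge0 x (lt0r_neq0 M_gt0).
case: (x %% M%:Z)%Z => // n _ n_lt.
by apply/mapP; exists n; rewrite // mem_iota add0n -ltz_nat.
Qed.

Lemma modz_sqr_residues (M : nat) (P : pred int) (x : int) : (0 < M)%N ->
  all (fun r => P (r ^+ 2 %% M%:Z)%Z) (residues M) -> P (x ^+ 2 %% M%:Z)%Z.
Proof. by move=> M0 /allP /(_ _ (modz_residues x M0)); rewrite modzXm. Qed.

(** * The real place *)

Lemma CD_eqs_sqr (T : comPzRingType) (y : T) : CD_eqs (y ^+ 2) y y y 1 y.
Proof. by split; ring. Qed.

Lemma CD_eqs_neg_trivial (R : realDomainType) (d x0 x1 x2 x3 x4 : R) :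
  d < 0 -> CD_eqs d x0 x1 x2 x3 x4 -> [/\ x0 = 0, x1 = 0, x2 = 0, x3 = 0 & x4 = 0].
Proof.
move=> d_lt0 [e1 e2 e3].
have sqr_le0 (x : R) : x ^+ 2 <= 0 -> x = 0.
  by move=> x_le0; apply/eqP; rewrite -sqrf_eq0 eq_le x_le0 sqr_ge0.
have := sqr_ge0 x2; have := sqr_ge0 x3; have := sqr_ge0 x4 => x4_ge0 x3_ge0 x2_ge0.
have x2_0 : x2 = 0 by apply: sqr_le0; nra.
have x4_0 : x4 = 0 by apply: sqr_le0; nra.
have x3_0 : x3 = 0 by apply: sqr_le0; nra.
have x1_0 : x1 = 0 by apply: sqr_le0; move: e2; rewrite x2_0 x3_0; lra.
have x0_0 : x0 = 0 by apply: sqr_le0; move: e1; rewrite x1_0 x2_0; lra.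
by [].
Qed.

Lemma real_place (R : realType) (D : int) : squarefree D ->
  (CD_real_point R D <-> real_square R D) /\ (real_square R D <-> 0 < D).
Proof.
case=> D_neq0 _.
have square_pos : real_square R D <-> 0 < D.
  split=> [[y Dy] | D_gt0]; last by exists (Num.sqrt D%:~R); rewrite sqr_sqrtr // ler0z ltW.
  by rewrite lt_neqAle eq_sym D_neq0 -(ler0z R) Dy sqr_ge0.
split=> //; split=> [[x0 [x1 [x2 [x3 [x4 [x_neq0 eqs]]]]]] | [y Dy]].
  apply/square_pos; rewrite ltNge le_eqVlt negb_or D_neq0 /=; apply/negP => D_lt0.
  by apply: x_neq0; apply: CD_eqs_neg_trivial eqs; rewrite ltrz0.
exists y, y, y, 1, y; split; first by case=> _ _ _ /eqP; rewrite oner_eq0.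
by rewrite Dy; exact: CD_eqs_sqr.
Qed.

(** * Square roots in Z_p *)

Definition zp_sqrt (p : nat) (D : int) (a : nat -> int) : Prop :=
  zp_compat p a /\ forall k, (a k ^+ 2 = D %[mod (p ^ k)%:Z])%Z.

Lemma zp_sqrt_padic_square (p : nat) (D : int) (a : nat -> int) :
  zp_sqrt p D a -> padic_square p D.
Proof. by case=> ac aD; exists a, 0%N; split=> // k; rewrite muln0 expn0 mulr1 aD. Qed.

Lemma zp_sqrt_CD_point (p : nat) (D : int) (a : nat -> int) :
  prime p -> zp_sqrt p D a -> CD_padic_point p D.
Proof.
move=> pp [ac aD]; exists a, a, a, (fun=> 1), a; split; first by split.
split; first by right; right; right; left; rewrite /zp_unit dvdz1 gtn_eqF ?prime_gt1.
move=> k; have /eqP := aD k; rewrite eqz_mod_dvd => pk_dvd.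
split; apply/eqP; rewrite eqz_mod_dvd subr0.
- by rewrite (_ : _ - _ + _ = 0) ?dvdz0 //; ring.
- by rewrite (_ : _ - _ + _ = - (a k ^+ 2 - D)) ?rpredN //; ring.
- by rewrite (_ : _ - _ + _ = 2 * (a k ^+ 2 - D)) ?dvdz_mull //; ring.
Qed.

Fixpoint iter_sig (P : nat -> int -> Prop) (y0 : {y | P 0%N y})
  (f : forall k, {y | P k y} -> {y | P k.+1 y}) (k : nat) : {y | P k y} :=
  if k is k'.+1 then f k' (iter_sig P y0 f k') else y0.

Lemma zp_compat_of_lifts (p : nat) (P : nat -> int -> Prop) (y0 : int) :
  P 0%N y0 ->
  (forall k y, P k y -> exists y', (y' = y %[mod (p ^ k)%:Z])%Z /\ P k.+1 y') ->
  exists a, zp_compat p a /\ forall k, P k (a k).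
Proof.
move=> P0 lift.
pose g k (s : {y | P k y}) :=
  boolp.cid (lift k (proj1_sig s) (proj2_sig s)).
pose f k (s : {y | P k y}) : {y | P k.+1 y} :=
  exist _ (proj1_sig (g k s)) (proj2 (proj2_sig (g k s))).
exists (fun k => proj1_sig (iter_sig P (exist _ y0 P0) f k)); split=> k.
  exact: (proj1 (proj2_sig (g k _))).
exact: proj2_sig.
Qed.

Lemma zp_sqrt_of_mod_shift (p j : nat) (D : int) (a : nat -> int) : zp_compat p a ->
  (forall k, (a k ^+ 2 = D %[mod (p ^ (j + k))%:Z])%Z) -> zp_sqrt p D a.
Proof.
move=> ac aD; split=> // k.
by apply: eqz_mod_dvdW (aD k); apply: dvdz_Posz_exp2l; exact: leq_addl.
Qed.

Lemma hensel_odd (p : nat) (D y0 : int) : prime p -> p != 2%N ->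
  ~~ (p%:Z %| y0)%Z -> (y0 ^+ 2 = D %[mod p%:Z])%Z -> exists a, zp_sqrt p D a.
Proof.
move=> pp p_neq2 p_ndvd_y0 y0D.
pose P k y := (y ^+ 2 = D %[mod (p ^ k.+1)%:Z])%Z /\ ~~ (p%:Z %| y)%Z.
suff [a [ac aP]] : exists a, zp_compat p a /\ forall k, P k (a k).
  by exists a; apply: (@zp_sqrt_of_mod_shift p 1) => // k; case: (aP k).
apply: (@zp_compat_of_lifts p _ y0); first by rewrite /P expn1.
move=> k y [/eqz_modP [w yD] p_ndvd_y]; rewrite Posz_expn in yD.
have /coprimezP [[u v] /= uv] : coprimez (2 * y) p.
  rewrite coprimez_sym coprimezE prime_coprime // abszM Euclid_dvdM //.
  by rewrite dvdn_prime2 // (negbTE p_neq2).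
have p_dvd_step : (p%:Z %| u * w * p%:Z ^+ k.+1)%Z.
  by rewrite exprS dvdz_mull // dvdz_mulr.
(* Newton step: u inverts 2 y modulo p. *)
exists (y - u * w * p%:Z ^+ k.+1); split.
  by apply/eqz_modP; exists (- u * w * p%:Z); rewrite Posz_expn exprS; ring.
split; last by rewrite rpredBr.
apply/eqz_modP; exists (w * v + u ^+ 2 * w ^+ 2 * p%:Z ^+ k); rewrite Posz_expn.
rewrite (_ : D = y ^+ 2 - w * p%:Z ^+ k.+1); last by rewrite -yD; ring.
apply/eqP; rewrite -subr_eq0; apply/eqP.
apply: (@eq_trans _ _ (w * p%:Z ^+ k.+1 * (1 - (u * (2 * y) + v * p%:Z)))).
  by rewrite !exprS; ring.
by rewrite uv subrr mulr0.
Qed.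

Lemma hensel_two (D : int) : (D = 1 %[mod 8])%Z -> exists a, zp_sqrt 2 D a.
Proof.
move=> D1.
pose P k y := (y ^+ 2 = D %[mod (2 ^ k.+3)%:Z])%Z /\ ~~ (2%:Z %| y)%Z.
suff [a [ac aP]] : exists a, zp_compat 2 a /\ forall k, P k (a k).
  by exists a; apply: (@zp_sqrt_of_mod_shift 2 3) => // k; case: (aP k).
apply: (@zp_compat_of_lifts 2 _ 1); first by split; rewrite // D1.
move=> k y [/eqz_modP [w yD] y_odd]; rewrite Posz_expn in yD.
have [y1 y_def] := ndvd2z_odd y_odd; subst y.
have [/dvdzP [w1 w_def] | /ndvd2z_odd [w1 w_def]] := boolP (2%:Z %| w)%Z; subst w.
  exists (y1 * 2 + 1); split=> //; split=> //.
  by apply/eqz_modP; exists w1; rewrite Posz_expn yD !exprS; ring.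
(* w odd: correct y by 2^(k+2), which changes y^2 by 2^(k+3) times an odd number. *)
exists (y1 * 2 + 1 + 2%:Z ^+ k.+2); split.
  by apply/eqz_modP; exists 4; rewrite Posz_expn !exprS; ring.
split; last by rewrite rpredDr // exprS dvdz_mulr.
apply/eqz_modP; exists (w1 + y1 + 1 + 2%:Z ^+ k); rewrite Posz_expn.
rewrite (_ : D = (y1 * 2 + 1) ^+ 2 - (w1 * 2 + 1) * 2%:Z ^+ k.+3); last by rewrite -yD; ring.
by rewrite !exprS; ring.
Qed.

(** * Squares in Q_p *)

Lemma sqr_mod_cancel_p (p : nat) (D Z : int) (n k : nat) : prime p ->
  (D * (p ^ (2 * n.+1))%:Z = Z ^+ 2 %[mod (p ^ k.+2)%:Z])%Z ->
  exists Z', (D * (p ^ (2 * n))%:Z = Z' ^+ 2 %[mod (p ^ k)%:Z])%Z.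
Proof.
move=> pp /eqz_modP [q DZ].
rewrite !Posz_expn mulnS -[k.+2]addn2 exprD [p%:Z ^+ (k + 2)]exprD in DZ.
have Z_def : Z ^+ 2 = (D * p%:Z ^+ (2 * n) - q * p%:Z ^+ k) * p%:Z ^+ 2.
  by rewrite mulrBl -!mulrA -DZ; ring.
have /dvdzP [Z' Z_eq] : (p%:Z %| Z)%Z.
  by apply: prime_dvdz_sqr pp _; rewrite Z_def dvdz_mull // dvdz_exp.
have p2_neq0 : p%:Z ^+ 2 != 0 by rewrite expf_neq0 // eqz_nat -lt0n prime_gt0.
exists Z'; apply/eqz_modP; exists q; rewrite !Posz_expn; apply: (mulIf p2_neq0).
by rewrite mulrBl -exprMn -Z_eq Z_def; ring.
Qed.

Lemma padic_square_sqr_mod (p : nat) (D : int) : prime p -> padic_square p D ->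
  forall k, exists Z, (D = Z ^+ 2 %[mod (p ^ k)%:Z])%Z.
Proof.
move=> pp [y [n [_ yD]]].
have {y yD} : forall k, exists Z, (D * (p ^ (2 * n))%:Z = Z ^+ 2 %[mod (p ^ k)%:Z])%Z.
  by move=> k; exists (y k).
elim: n => [|n IH] DZ k.
  by have [Z] := DZ k; rewrite muln0 expn0 mulr1; exists Z.
by apply: IH => j; have [Z] := DZ j.+2; exact: sqr_mod_cancel_p.
Qed.

Lemma padic_square2_mod8 (D : int) : squarefree D -> padic_square 2 D -> (D = 1 %[mod 8])%Z.
Proof.
move=> sqf /(@padic_square_sqr_mod 2 D isT)/(_ 3%N) [Z DZ].
have D4 : ~~ (4 %| D %% 8)%Z by rewrite dvdz_modz //; exact: (@squarefree_ndvdz D 2 sqf).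
have := @modz_sqr_residues 8 (fun s => ~~ (4 %| s)%Z ==> (s == 1)) Z isT.
by rewrite -[(Z ^+ 2 %% 8)%Z]DZ => /(_ isT) /implyP /(_ D4) /eqP.
Qed.

Lemma padic_square3_mod3 (D : int) : squarefree D -> padic_square 3 D -> (D = 1 %[mod 3])%Z.
Proof.
move=> sqf /(@padic_square_sqr_mod 3 D isT)/(_ 2%N) [Z DZ].
have D9 : ~~ (9 %| D %% 9)%Z by rewrite dvdz_modz //; exact: (@squarefree_ndvdz D 3 sqf).
have := @modz_sqr_residues 9 (fun s => ~~ (9 %| s)%Z ==> ((s %% 3)%Z == 1)) Z isT.
by rewrite -[(Z ^+ 2 %% 9)%Z]DZ modz_dvdm // => /(_ isT) /implyP /(_ D9) /eqP.
Qed.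

Lemma padic_square5_mod5 (D : int) : squarefree D -> padic_square 5 D ->
  (D = 1 %[mod 5])%Z \/ (D = -1 %[mod 5])%Z.
Proof.
move=> sqf /(@padic_square_sqr_mod 5 D isT)/(_ 2%N) [Z DZ].
have D25 : ~~ (25 %| D %% 25)%Z by rewrite dvdz_modz //; exact: (@squarefree_ndvdz D 5 sqf).
have := @modz_sqr_residues 25
  (fun s => ~~ (25 %| s)%Z ==> ((s %% 5)%Z == 1) || ((s %% 5)%Z == 4)) Z isT.
rewrite -[(Z ^+ 2 %% 25)%Z]DZ modz_dvdm // => /(_ isT) /implyP /(_ D25).
by case/orP=> /eqP ->; [left | right].
Qed.

(** * Points over Q_p *)

Lemma CD_eqs_mod_dvdW {m n D x0 x1 x2 x3 x4 : int} : (m %| n)%Z ->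
  CD_eqs_mod n D x0 x1 x2 x3 x4 -> CD_eqs_mod m D x0 x1 x2 x3 x4.
Proof. by move=> mn [e1 e2 e3]; split; apply: eqz_mod_dvdW mn _. Qed.

Lemma CD_eqs_mod_residues (m D x0 x1 x2 x3 x4 : int) :
  CD_eqs_mod m D x0 x1 x2 x3 x4 ->
  CD_eqs_mod m (D %% m)%Z (x0 %% m)%Z (x1 %% m)%Z (x2 %% m)%Z (x3 %% m)%Z (x4 %% m)%Z.
Proof.
case=> e1 e2 e3; split; [rewrite -e1 | rewrite -e2 | rewrite -e3];
  repeat first [done | exact: modz_mod | apply: eqz_modD | apply: eqz_modN
               | apply: eqz_modM | apply: eqz_modX].
Qed.

Definition CD_eqs_modb (m D x0 x1 x2 x3 x4 : int) : bool :=
  [&& (x0 ^+ 2 - 2 * x1 ^+ 2 + x2 ^+ 2 == 0 %[mod m])%Z,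
      (x1 ^+ 2 - 2 * x2 ^+ 2 + D * x3 ^+ 2 == 0 %[mod m])%Z &
      (x2 ^+ 2 - 2 * D * x3 ^+ 2 + x4 ^+ 2 == 0 %[mod m])%Z].

Lemma CD_eqs_modP (m D x0 x1 x2 x3 x4 : int) :
  reflect (CD_eqs_mod m D x0 x1 x2 x3 x4) (CD_eqs_modb m D x0 x1 x2 x3 x4).
Proof. by apply: (iffP and3P) => -[e1 e2 e3]; split; exact/eqP. Qed.

Definition CD_mod_forces_dvd (M : nat) (p d : int) : bool :=
  let R := residues M in
  all (fun x0 => all (fun x1 => all (fun x2 => all (fun x3 => all (fun x4 =>
    CD_eqs_modb M%:Z d x0 x1 x2 x3 x4 ==> [&& p %| x0, p %| x1, p %| x2 & p %| x4]%Z)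
  R) R) R) R) R.

Lemma CD_mod_forces_dvdP {M : nat} {p D x0 x1 x2 x3 x4 : int} : (0 < M)%N ->
  (p %| M%:Z)%Z -> CD_mod_forces_dvd M p (D %% M%:Z)%Z ->
  CD_eqs_mod M%:Z D x0 x1 x2 x3 x4 -> [&& p %| x0, p %| x1, p %| x2 & p %| x4]%Z.
Proof.
move=> M0 pM forces /CD_eqs_mod_residues /CD_eqs_modP eqs.
have r x := modz_residues x M0.
move/allP: forces => /(_ _ (r x0)) /allP /(_ _ (r x1)) /allP /(_ _ (r x2))
  /allP /(_ _ (r x3)) /allP /(_ _ (r x4)) /implyP /(_ eqs).
by rewrite !dvdz_modz.
Qed.

Lemma dvdz_CD_x3 {p : nat} {D x1 x2 x3 : int} : prime p -> squarefree D ->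
  (x1 ^+ 2 - 2 * x2 ^+ 2 + D * x3 ^+ 2 = 0 %[mod (p ^ 2)%:Z])%Z ->
  (p%:Z %| x1)%Z -> (p%:Z %| x2)%Z -> (p%:Z %| x3)%Z.
Proof.
move=> pp sqf /eqP; rewrite eqz_mod_dvd subr0 => p2_dvd.
move=> /dvdzP [a x1_def] /dvdzP [b x2_def]; subst x1 x2; apply: contraT => p_ndvd_x3.
have cop : coprimez (p ^ 2)%:Z (x3 ^+ 2).
  by rewrite Posz_expn coprimezXl // coprimezXr // coprimezE prime_coprime.
suff : ((p ^ 2)%:Z %| x3 ^+ 2 * D)%Z.
  by rewrite Gauss_dvdzr // (negbTE (squarefree_ndvdz p sqf pp)).
rewrite (_ : _ * D = (a * p%:Z) ^+ 2 - 2 * (b * p%:Z) ^+ 2 + D * x3 ^+ 2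
                     - (a ^+ 2 - 2 * b ^+ 2) * (p ^ 2)%:Z); last by rewrite Posz_expn; ring.
by rewrite rpredB // dvdz_mull.
Qed.

Lemma zp_unit_ndvdz {p : nat} {a : nat -> int} (k : nat) :
  zp_compat p a -> zp_unit p a -> ~~ (p%:Z %| a k.+1)%Z.
Proof.
move=> ac; suff a_mod : (a k.+1 = a 1%N %[mod p%:Z])%Z.
  by apply: contra => /dvdz_mod0P a0; apply/dvdz_mod0P; rewrite -a_mod.
elim: k => // k IH; rewrite -IH; apply: eqz_mod_dvdW (ac k.+1).
by rewrite Posz_expn exprS dvdz_mulr.
Qed.

Lemma padic_point_obstruction (p K M : nat) (D : int) : prime p -> squarefree D ->
  (2 <= K)%N -> (M%:Z %| (p ^ K)%:Z)%Z -> (p%:Z %| M%:Z)%Z ->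
  CD_mod_forces_dvd M p (D %% M%:Z)%Z ->
  ~ CD_padic_point p D.
Proof.
move=> pp sqf K_ge2 M_dvd p_dvd forces.
move=> [x0 [x1 [x2 [x3 [x4 [[c0 c1 c2 c3 c4] [unit eqs]]]]]]].
have [k K_def] : exists k, K = k.+1 by exists K.-1; rewrite prednK // ltnW.
subst K.
have M_gt0 : (0 < M)%N by rewrite (dvdn_gt0 _ M_dvd) // expn_gt0 prime_gt0.
have /and4P [d0 d1 d2 d4] := CD_mod_forces_dvdP M_gt0 p_dvd forces
  (CD_eqs_mod_dvdW M_dvd (eqs k.+1)).
have [_ e2 _] := CD_eqs_mod_dvdW (dvdz_Posz_exp2l p K_ge2) (eqs k.+1).
have d3 := dvdz_CD_x3 pp sqf e2 d1 d2.
by case: unit => [/(zp_unit_ndvdz k c0)/negP[] | [/(zp_unit_ndvdz k c1)/negP[]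
  | [/(zp_unit_ndvdz k c2)/negP[] | [/(zp_unit_ndvdz k c3)/negP[]
  | /(zp_unit_ndvdz k c4)/negP[]]]]].
Qed.

Lemma padic_point2_mod8 (D : int) : squarefree D -> CD_padic_point 2 D -> (D = 1 %[mod 8])%Z.
Proof.
move=> sqf pt; apply/eqP; apply: contraT => D1.
have D4 : ~~ (4 %| D %% 8)%Z by rewrite dvdz_modz //; exact: (@squarefree_ndvdz D 2 sqf).
have check : all (fun d => ~~ (4 %| d)%Z ==> (d != 1) ==> CD_mod_forces_dvd 8 2 d)
  (residues 8) by vm_compute.
have forces : CD_mod_forces_dvd 8 2 (D %% 8)%Z.
  by move/allP: check => /(_ _ (@modz_residues D 8 isT)) /implyP /(_ D4) /implyP /(_ D1).
by case: (@padic_point_obstruction 2 3 8 D isT sqf isT isT isT forces pt).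
Qed.

Lemma padic_point3_mod3 (D : int) : squarefree D -> CD_padic_point 3 D -> (D = 1 %[mod 3])%Z.
Proof.
move=> sqf pt; apply/eqP; apply: contraT => D1.
have check : all (fun d => (d != 1) ==> CD_mod_forces_dvd 3 3 d) (residues 3)
  by vm_compute.
have forces : CD_mod_forces_dvd 3 3 (D %% 3)%Z.
  by move/allP: check => /(_ _ (@modz_residues D 3 isT)) /implyP /(_ D1).
by case: (@padic_point_obstruction 3 2 3 D isT sqf isT isT isT forces pt).
Qed.

Lemma padic_point5_mod5 (D : int) : squarefree D -> CD_padic_point 5 D ->
  (D = 1 %[mod 5])%Z \/ (D = -1 %[mod 5])%Z.
Proof.
move=> sqf pt; have [D1 | D1] := eqVneq (D %% 5)%Z 1; first by left.
have [D4 | D4] := eqVneq (D %% 5)%Z 4; first by right.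
have check : all (fun d => (d != 1) ==> (d != 4) ==> CD_mod_forces_dvd 5 5 d)
  (residues 5) by vm_compute.
have forces : CD_mod_forces_dvd 5 5 (D %% 5)%Z.
  by move/allP: check => /(_ _ (@modz_residues D 5 isT)) /implyP /(_ D1) /implyP /(_ D4).
by case: (@padic_point_obstruction 5 2 5 D isT sqf isT isT isT forces pt).
Qed.

Lemma padic_place (p : nat) (D : int) (C : Prop) : prime p ->
  (C -> exists a, zp_sqrt p D a) -> (CD_padic_point p D -> C) -> (padic_square p D -> C) ->
  (CD_padic_point p D <-> padic_square p D) /\ (padic_square p D <-> C).
Proof.
move=> pp root point_C square_C.
have C_square_point : C -> padic_square p D /\ CD_padic_point p D.
  case/root=> a a_sqrt; split; first exact: zp_sqrt_padic_square a_sqrt.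
  exact: zp_sqrt_CD_point pp a_sqrt.
split; split.
- by move/point_C/C_square_point => [].
- by move/square_C/C_square_point => [].
- exact: square_C.
- by move/C_square_point => [].
Qed.

Theorem lemma4p2 (D : int) : squarefree D ->
  (forall R : realType,
     (CD_real_point R D <-> real_square R D) /\ (real_square R D <-> 0 < D))
  /\ ((CD_padic_point 2 D <-> padic_square 2 D) /\
      (padic_square 2 D <-> (D = 1 %[mod 8])%Z))
  /\ ((CD_padic_point 3 D <-> padic_square 3 D) /\
      (padic_square 3 D <-> (D = 1 %[mod 3])%Z))
  /\ ((CD_padic_point 5 D <-> padic_square 5 D) /\
      (padic_square 5 D <-> ((D = 1 %[mod 5])%Z \/ (D = -1 %[mod 5])%Z))).
Proof.
move=> sqf; split; first by move=> R; exact: real_place.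
split; [|split]; apply: padic_place => //.
- exact: hensel_two.
- exact: padic_point2_mod8.
- exact: padic_square2_mod8.
- by move=> D1; apply: (@hensel_odd _ D 1); rewrite // D1.
- exact: padic_point3_mod3.
- exact: padic_square3_mod3.
- by case=> D_pm1; [apply: (@hensel_odd _ D 1) | apply: (@hensel_odd _ D 2)];
    rewrite // D_pm1.
- exact: padic_point5_mod5.
- exact: padic_square5_mod5.
Qed.
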